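(* Let $R$ be a commutative ring, $M$ an $R$-module having at least one prime submodule, $X=\mathrm{Spec}(M)$, and $N$ an $R$-module. For each $P\in X$, the stalk $\mathcal{A}(N,M)_P=\varinjlim_{P\in U}\mathcal{A}(N,M)(U)$ is isomorphic to $N_{\mathfrak p}$, where $\mathfrak p=(P:M)$.
   Context: For a submodule $L$ of an $R$-module $M$, $(L:M)=\{r\in R\mid rM\subseteq L\}$. A submodule $P$ of $M$ is prime if $P\neq M$ and whenever $rm\in P$ ($r\in R$, $m\in M$) then $r\in (P:M)$ or $m\in P$; then $(P:M)$ is a prime ideal. $\mathrm{Spec}(M)$ is the set of prime submodules. For $L\le M$, $V(L)=\{P\in X\mid (P:M)\supseteq (L:M)\}$; these are the closed sets of the Zariski topology on $X$. For open $U\subseteq X$, $\mathrm{Supp}(U)=\{(P:M)\mid P\in U\}$. The sheaf $\mathcal{A}(N,M)$ on $X$: $\mathcal{A}(N,M)(U)$ is the set of families $(\gamma_{\mathfrak p})_{\mathfrak p\in\mathrm{Supp}(U)}\in\prod_{\mathfrak p\in\mathrm{Supp}(U)}N_{\mathfrak p}$ such that for each $Q\in U$ there exist an open neighbourhood $W\subseteq U$ of $Q$ and $s\in R$, $m\in N$ with $s\notin (P:M)$ and $\gamma_{(P:M)}=m/s\in N_{(P:M)}$ for every $P\in W$; restriction maps restrict families, and $\mathcal{A}(N,M)(\emptyset)=0$. *)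

From mathcomp Require Import all_boot all_algebra.
Set Implicit Arguments.
Unset Strict Implicit.
Unset Printing Implicit Defensive.
Import GRing.Theory.
Local Open Scope ring_scope.

Section ModuleSpec.
Variable R : comPzRingType.

Definition is_submodule (M : lmodType R) (L : M -> Prop) : Prop :=
  L 0 /\ (forall x y, L x -> L y -> L (x + y)) /\
  (forall (r : R) x, L x -> L (r *: x)).

Definition colon (M : lmodType R) (L : M -> Prop) : R -> Prop :=
  fun r => forall m : M, L (r *: m).

Definition prime_submodule (M : lmodType R) (P : M -> Prop) : Prop :=
  is_submodule P /\ (exists m, ~ P m) /\
  (forall (r : R) (m : M), P (r *: m) -> colon P r \/ P m).

Definition spec (M : lmodType R) := {P : M -> Prop | prime_submodule P}.

Definition pt_ideal (M : lmodType R) (P : spec M) : R -> Prop :=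
  colon (proj1_sig P).

Definition Vset (M : lmodType R) (L : M -> Prop) : spec M -> Prop :=
  fun P => forall r, colon L r -> pt_ideal P r.

Definition zariski_open (M : lmodType R) (U : spec M -> Prop) : Prop :=
  exists L : M -> Prop, is_submodule L /\ forall P, U P <-> ~ Vset L P.

Definition loc_rel (N : lmodType R) (p : R -> Prop) (a b : N * R) : Prop :=
  exists t : R, ~ p t /\ t *: (b.2 *: a.1 - a.2 *: b.1) = 0.

(* a fraction a.1 / a.2 is an element of N_p *)
Definition loc_elt (N : lmodType R) (p : R -> Prop) (a : N * R) : Prop :=
  ~ p a.2.

Definition loc_add (N : lmodType R) (a b : N * R) : N * R :=
  (b.2 *: a.1 + a.2 *: b.1, a.2 * b.2).

Definition loc_scale (N : lmodType R) (r : R) (a : N * R) : N * R :=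
  (r *: a.1, a.2).

(* A family (gamma_p)_{p in Supp(U)} is encoded by a function g on ideals;
   only its values at p = (Q:M), Q in U, matter. *)
Definition is_section (M N : lmodType R) (U : spec M -> Prop)
  (g : (R -> Prop) -> N * R) : Prop :=
  (forall Q, U Q -> loc_elt (pt_ideal Q) (g (pt_ideal Q))) /\
  (forall Q, U Q -> exists W : spec M -> Prop,
     zariski_open W /\ (forall Q', W Q' -> U Q') /\ W Q /\
     exists (s : R) (m : N), forall Q', W Q' ->
       ~ pt_ideal Q' s /\ loc_rel (pt_ideal Q') (g (pt_ideal Q')) (m, s)).

Definition germ_raw (M N : lmodType R) :=
  ((spec M -> Prop) * ((R -> Prop) -> N * R))%type.

(* (U, gamma) with U an open neighbourhood of P and gamma in A(N,M)(U) *)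
Definition is_germ (M N : lmodType R) (P : spec M) (x : germ_raw M N) : Prop :=
  zariski_open x.1 /\ x.1 P /\ is_section x.1 x.2.

(* equality in the direct limit: equal restrictions on a smaller nbhd *)
Definition germ_eq (M N : lmodType R) (P : spec M) (x y : germ_raw M N) : Prop :=
  exists W : spec M -> Prop, zariski_open W /\ W P /\
    (forall Q, W Q -> x.1 Q /\ y.1 Q) /\
    (forall Q, W Q -> loc_rel (pt_ideal Q) (x.2 (pt_ideal Q)) (y.2 (pt_ideal Q))).

Definition germ_add (M N : lmodType R) (x y : germ_raw M N) : germ_raw M N :=
  (fun Q => x.1 Q /\ y.1 Q, fun p => loc_add (x.2 p) (y.2 p)).

Definition germ_scale (M N : lmodType R) (r : R) (x : germ_raw M N) : germ_raw M N :=
  (x.1, fun p => loc_scale r (x.2 p)).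

(* f induces an R-module isomorphism  A(N,M)_P  ~=  N_{(P:M)}  :
   well defined and injective, surjective, additive and R-linear,
   all modulo the equivalence relations defining the two quotients. *)
Definition stalk_loc_iso (M N : lmodType R) (P : spec M)
  (f : germ_raw M N -> N * R) : Prop :=
  let p := pt_ideal P in
  (forall x, is_germ P x -> loc_elt p (f x)) /\
  (forall x y, is_germ P x -> is_germ P y ->
     (germ_eq P x y <-> loc_rel p (f x) (f y))) /\
  (forall a, loc_elt p a -> exists x, is_germ P x /\ loc_rel p (f x) a) /\
  (forall x y, is_germ P x -> is_germ P y ->
     loc_rel p (f (germ_add x y)) (loc_add (f x) (f y))) /\
  (forall (r : R) x, is_germ P x ->
     loc_rel p (f (germ_scale r x)) (loc_scale r (f x))).

End ModuleSpec.

(* The stalk map sends a germ (U, gamma) to its value gamma_p at p = (P:M).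
   Every germ is locally a constant fraction m/s, so it is determined near P
   by its value at p: if two germs agree at p, i.e. t (s' m - s m') = 0 with
   t not in p, then they agree on the neighbourhood of P where t, s and s'
   stay outside (Q:M).  Conversely a fraction m/s with s not in p is the germ
   of the constant section m/s on the basic open set D(s). *)
From mathcomp Require Import all_boot all_algebra.
From mathcomp Require Import ring.
From Stdlib Require Import Classical.
Set Implicit Arguments.
Unset Strict Implicit.
Unset Printing Implicit Defensive.
Import GRing.Theory.
Local Open Scope ring_scope.

Section PrimeColon.
Variables (R : comPzRingType) (M : lmodType R).

Lemma pt_idealN1 (Q : spec M) : ~ pt_ideal Q 1.
Proof.
rewrite /pt_ideal; case: Q => P [_ [[m Pm] _]] /= P1; apply: Pm.
by have := P1 m; rewrite scale1r.
Qed.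

Lemma pt_idealNM (Q : spec M) (a b : R) :
  ~ pt_ideal Q a -> ~ pt_ideal Q b -> ~ pt_ideal Q (a * b).
Proof.
rewrite /pt_ideal; case: Q => P [_ [_ Pprime]] /= Na Nb Pab; apply: Nb => m.
case: (Pprime a (b *: m)) => [|/Na //|//].
by rewrite scalerA; apply: Pab.
Qed.

End PrimeColon.

Section Localization.
Variables (R : comPzRingType) (N : lmodType R) (p : R -> Prop).
Hypotheses (pN1 : ~ p 1) (pNM : forall a b, ~ p a -> ~ p b -> ~ p (a * b)).

Lemma loc_rel_refl (a : N * R) : loc_rel p a a.
Proof. by exists 1; split => //; rewrite subrr scaler0. Qed.

Lemma loc_rel_sym (a b : N * R) : loc_rel p a b -> loc_rel p b a.
Proof. by case=> t [pt Et]; exists t; split => //; rewrite -opprB scalerN Et oppr0. Qed.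

Lemma loc_rel_trans (a b c : N * R) :
  ~ p b.2 -> loc_rel p a b -> loc_rel p b c -> loc_rel p a c.
Proof.
move=> pb [t [pt Eab]] [u [pu Ebc]]; exists (t * u * b.2); split.
  by apply: pNM => //; apply: pNM.
have -> : (t * u * b.2) *: (c.2 *: a.1 - a.2 *: c.1) =
   (u * c.2) *: (t *: (b.2 *: a.1 - a.2 *: b.1)) +
   (t * a.2) *: (u *: (c.2 *: b.1 - b.2 *: c.1)).
  rewrite !scalerBr !scalerA.
  have -> : u * c.2 * t * b.2 = t * u * b.2 * c.2 by ring.
  have -> : t * a.2 * u * b.2 = t * u * b.2 * a.2 by ring.
  have -> : t * a.2 * u * c.2 = u * c.2 * t * a.2 by ring.
  by rewrite addrA subrK.
by rewrite Eab Ebc !scaler0 addr0.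
Qed.

End Localization.

Section Zariski.
Variables (R : comPzRingType) (M : lmodType R).

(* D(t) = X \ V(tM) *)
Lemma zariski_open_D (t : R) : zariski_open (fun Q : spec M => ~ pt_ideal Q t).
Proof.
exists (fun x => exists m, x = t *: m); split.
  split; first by exists 0; rewrite scaler0.
  split; first by move=> x y [m ->] [m' ->]; exists (m + m'); rewrite scalerDr.
  by move=> r x [m ->]; exists (r *: m); rewrite !scalerA mulrC.
move=> Q; split; first by move=> Nt V; apply: Nt; apply: V => m; exists m.
by move=> NV Qt; apply: NV => r Hr m; case: (Hr m) => m' ->; apply: Qt.
Qed.

(* X \ V(L1) meets X \ V(L2) in X \ V(L1 /\ L2), since r1 r2 lies in the
   colon ideal of L1 /\ L2 whenever r1, r2 lie in those of L1, L2. *)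
Lemma zariski_openI (U1 U2 : spec M -> Prop) :
  zariski_open U1 -> zariski_open U2 -> zariski_open (fun Q => U1 Q /\ U2 Q).
Proof.
move=> [L1 [[L1_0 [L1D L1Z]] U1E]] [L2 [[L2_0 [L2D L2Z]] U2E]].
exists (fun x => L1 x /\ L2 x); split.
  split=> //; split.
    by move=> x y [? ?] [? ?]; split; [apply: L1D | apply: L2D].
  by move=> r x [? ?]; split; [apply: L1Z | apply: L2Z].
move=> Q; rewrite U1E U2E; split.
  move=> [NV1 NV2] V; apply: NV1 => r1 Hr1; apply: NNPP => Nr1.
  apply: NV2 => r2 Hr2; apply: NNPP => Nr2.
  apply: (pt_idealNM Nr1 Nr2); apply: V => m; split.
    by rewrite -scalerA; apply: Hr1.
  by rewrite mulrC -scalerA; apply: Hr2.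
by move=> NV; split=> V; apply: NV => r Hr; apply: V => m; case: (Hr m).
Qed.

End Zariski.

Section Stalk.
Variables (R : comPzRingType) (M N : lmodType R) (P : spec M).

Lemma germ_eq_of_loc_rel (x y : germ_raw M N) :
  is_germ P x -> is_germ P y ->
  loc_rel (pt_ideal P) (x.2 (pt_ideal P)) (y.2 (pt_ideal P)) -> germ_eq P x y.
Proof.
move=> [_ [xP [xunit xloc]]] [_ [yP [yunit yloc]]] Exy.
have [W1 [W1open [W1x [W1P [s1 [m1 E1]]]]]] := xloc P xP.
have [W2 [W2open [W2y [W2P [s2 [m2 E2]]]]]] := yloc P yP.
have trans (Q : spec M) := @loc_rel_trans R N (pt_ideal Q) (@pt_idealNM _ _ Q).
have sym (Q : spec M) := @loc_rel_sym R N (pt_ideal Q).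
have [u [Pu Eu]] : loc_rel (pt_ideal P) (m1, s1) (m2, s2).
  have [_ xE1] := E1 P W1P; have [_ yE2] := E2 P W2P.
  apply: (trans P _ _ _ (yunit P yP) _ yE2).
  exact: (trans P _ _ _ (xunit P xP) (sym P _ _ xE1) Exy).
exists (fun Q => (W1 Q /\ W2 Q) /\ ~ pt_ideal Q u); split.
  by apply: zariski_openI; [apply: zariski_openI | apply: zariski_open_D].
split; first by split; [split|].
split; first by move=> Q [[/W1x ? /W2y ?] _].
move=> Q [[W1Q W2Q] Qu].
have [Qs1 xE1] := E1 Q W1Q; have [Qs2 yE2] := E2 Q W2Q.
apply: (trans Q _ (m2, s2) _ Qs2 _ (sym Q _ _ yE2)).
by apply: (trans Q _ (m1, s1) _ Qs1 xE1); exists u.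
Qed.

Lemma constant_germ (m : N) (s : R) : ~ pt_ideal P s ->
  is_germ P (fun Q : spec M => ~ pt_ideal Q s, fun _ => (m, s)).
Proof.
have Ds := zariski_open_D M s.
move=> Ps; split; first exact: Ds.
split; first exact: Ps.
split; first by move=> Q Qs.
move=> Q Qs; exists (fun Q => ~ pt_ideal Q s); split; first exact: Ds.
split; first by move=> ?.
split; first exact: Qs.
exists s, m => Q' Q's; split; first exact: Q's.
exact/loc_rel_refl/(@pt_idealN1 _ _ Q').
Qed.

End Stalk.

Theorem proposition3p2 (R : comPzRingType) (M N : lmodType R)
  (hM : exists P : M -> Prop, prime_submodule P) (P : spec M) :
  exists f : germ_raw M N -> N * R, stalk_loc_iso P f.
Proof.
have refl a := @loc_rel_refl R N (pt_ideal P) (@pt_idealN1 _ _ P) a.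
exists (fun x => x.2 (pt_ideal P)).
split; first by move=> x [_ [xP [xunit _]]]; apply: xunit.
split.
  move=> x y xgerm ygerm; split; last exact: germ_eq_of_loc_rel.
  by move=> [W [_ [WP [_ WE]]]]; apply: WE.
split; last by split=> *; apply: refl.
by move=> [m s] Ps; exists (fun Q => ~ pt_ideal Q s, fun _ => (m, s)); split;
  [apply: constant_germ | apply: refl].
Qed.
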